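(* Let $G=\langle S\mid R\rangle$ be a finite group presentation. If $G$ is $k$-chordal with respect to $S$ for some $k$, then $\langle S\mid R\rangle$ admits a recursive isoperimetric function; consequently, $\langle S\mid R\rangle$ has solvable word problem.
   Context: $S$ and $R\subseteq F(S)$ are finite, $F(S)$ the free group on $S$, and $S^{\pm1}=S\cup S^{-1}\setminus\{e\}$. For $\omega\in F(S)$ representing the identity of $G$, its area $A(\omega)$ is the least $m$ such that $\omega=\prod_{i=1}^m u_ir_i^{\varepsilon_i}u_i^{-1}$ in $F(S)$ with $u_i\in F(S)$, $r_i\in R$, $\varepsilon_i\in\{\pm1\}$. The Dehn function is $\mathrm{Dehn}(n)=\max\{A(\omega):\omega\in\langle\langle R\rangle\rangle,\ |\omega|\le n\}$, where $\langle\langle R\rangle\rangle$ is the normal closure of $R$ in $F(S)$ and $|\omega|$ the word length. An isoperimetric function is a non-decreasing $f:\mathbb{N}\to\mathbb{R}$ with $\mathrm{Dehn}\le f$. A relation $s_1\cdots s_n=e$ in $G$ with $n>2$, $s_i\in S^{\pm1}$, is simple if $s_p\cdots s_q=e$ holds exactly when $(p,q)=(1,n)$. $G$ is $k$-chordal with respect to $S$ if for every simple relation $s_1\cdots s_n=e$ with $n\ge k$ there exist $1\le i<j\le n$ and $s'_1,\dots,s'_r\in S^{\pm1}$ with $s_i\cdots s_j=s'_1\cdots s'_r$ and $r\le\min\{j-i,\,n-j+i-2\}$. *)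

From mathcomp Require Import all_boot.
Set Implicit Arguments. Unset Strict Implicit. Unset Printing Implicit Defensive.

(* A letter (s, b) denotes s if b = false and s^{-1} if b = true.       *)
Definition letter (S : finType) := (S * bool)%type.
Definition word (S : finType) := seq (letter S).

Definition inv_letter (S : finType) (x : letter S) : letter S := (x.1, ~~ x.2).
Definition inv_word (S : finType) (w : word S) : word S := rev (map (@inv_letter S) w).

Fixpoint reduce (S : finType) (w : word S) : word S :=
  match w with
  | [::] => [::]
  | x :: w' =>
      match reduce w' with
      | y :: r => if y == inv_letter x then r else x :: y :: r
      | [::] => [:: x]
      end
  end.

Definition free_eq (S : finType) (u v : word S) : Prop := reduce u = reduce v.

(* The product  prod_i u_i r_i^{eps_i} u_i^{-1}  for a list of triples
   (u_i, r_i, eps_i); eps = true means exponent -1. *)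
Definition conj_prod (S : finType) (fs : seq (word S * word S * bool)) : word S :=
  flatten [seq let: (u, r, e) := t in u ++ (if e then inv_word r else r) ++ inv_word u
          | t <- fs].

Definition area_le (S : finType) (R : seq (word S)) (w : word S) (m : nat) : Prop :=
  exists fs : seq (word S * word S * bool),
    [/\ size fs <= m, all (fun t => t.1.2 \in R) fs & free_eq w (conj_prod fs)].

(* w lies in the normal closure <<R>> of R in F(S), i.e. w = e in G = <S|R>. *)
Definition in_ncl (S : finType) (R : seq (word S)) (w : word S) : Prop :=
  exists m, area_le R w m.

Definition G_eq (S : finType) (R : seq (word S)) (u v : word S) : Prop :=
  in_ncl R (u ++ inv_word v).

Definition isoperimetric (S : finType) (R : seq (word S)) (f : nat -> nat) : Prop :=
  {homo f : m n / m <= n} /\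
  forall (n : nat) (w : word S), in_ncl R w -> size w <= n -> area_le R w (f n).

(* subword s p q = s_p ... s_q (1-indexed, 1 <= p <= q <= size s). *)
Definition subword (T : Type) (s : seq T) (p q : nat) : seq T :=
  take (q.+1 - p) (drop p.-1 s).

Definition simple_relation (S : finType) (R : seq (word S)) (s : word S) : Prop :=
  2 < size s /\
  forall p q, 1 <= p -> p <= q -> q <= size s ->
    (in_ncl R (subword s p q) <-> (p = 1 /\ q = size s)).

(* r <= min{j - i, n - j + i - 2} is written without truncated subtraction. *)
Definition k_chordal (S : finType) (R : seq (word S)) (k : nat) : Prop :=
  forall s : word S, simple_relation R s -> k <= size s ->
    exists i j (s' : word S),
      [/\ 1 <= i, i < j & j <= size s] /\
      [/\ size s' + i <= j, size s' + j + 2 <= size s + i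
        & G_eq R (subword s i j) s'].

Inductive code : Type :=
| cZero : code
| cSucc : code
| cProj : nat -> code
| cComp : code -> seq code -> code
| cPrimRec : code -> code -> code
| cMu : code -> code.

Inductive eval : code -> seq nat -> nat -> Prop :=
| evZero xs : eval cZero xs 0
| evSucc x xs : eval cSucc (x :: xs) x.+1
| evProj i xs : i < size xs -> eval (cProj i) xs (nth 0 xs i)
| evComp f gs xs ys y : evals gs xs ys -> eval f ys y -> eval (cComp f gs) xs y
| evRec0 g h xs y : eval g xs y -> eval (cPrimRec g h) (0 :: xs) y
| evRecS g h n xs y z : eval (cPrimRec g h) (n :: xs) y ->
    eval h (n :: y :: xs) z -> eval (cPrimRec g h) (n.+1 :: xs) z
| evMu f xs n : eval f (n :: xs) 0 ->
    (forall m, m < n -> exists v, 0 < v /\ eval f (m :: xs) v) ->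
    eval (cMu f) xs n
with evals : seq code -> seq nat -> seq nat -> Prop :=
| evsNil xs : evals [::] xs [::]
| evsCons g gs xs y ys : eval g xs y -> evals gs xs ys -> evals (g :: gs) xs (y :: ys).

Definition recursive_fun (f : nat -> nat) : Prop :=
  exists c : code, forall n, eval c [:: n] (f n).

(* Goedel numbering of words: letter (s,b) |-> 2*rank(s) + b,
   [::] |-> 0,  a :: w |-> 2^a * (2 * code(w) + 1)  (a bijection seq nat ~ nat). *)
Definition enc_letter (S : finType) (x : letter S) : nat :=
  (enum_rank x.1).*2 + x.2.
Fixpoint enc_word (S : finType) (w : word S) : nat :=
  match w with
  | [::] => 0
  | x :: w' => 2 ^ enc_letter x * (enc_word w').*2.+1
  end.

Definition word_problem_solvable (S : finType) (R : seq (word S)) : Prop :=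
  exists c : code, forall w : word S,
    (in_ncl R w -> eval c [:: enc_word w] 1) /\
    (~ in_ncl R w -> eval c [:: enc_word w] 0).

From mathcomp Require Import all_boot zify.
From Stdlib Require Import Classical.
Set Implicit Arguments. Unset Strict Implicit. Unset Printing Implicit Defensive.

(* Let [w] be trivial in [G] with [|w| >= max k 3].  If [w] is not a simple relation
   it has a proper trivial subword; otherwise k-chordality gives a chord, i.e. a subword
   equal in [G] to a strictly shorter word.  Either way [w] is the product (up to
   conjugation) of two strictly shorter trivial words, the loop [s_i...s_j s^-1] and the
   word [w] with [s_i...s_j] replaced by [s], so [A(w)] is at most the sum of their
   areas.  By induction [A(w) <= C 2^|w|], where [C] bounds the areas of the finitely
   many short trivial words.  The same splitting decides triviality: a word is trivial
   iff it is short and in a fixed finite list, or it splits into two shorter trivial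
   words.  Tabulating this recursion over all words of length at most [n], with the
   table stored as the bits of one number, is primitive recursive. *)

(** * Free reduction *)

Section FreeReduction.
Variable S : finType.
Implicit Types (x y : letter S) (a b c u v w : word S).

Lemma inv_letterK : involutive (@inv_letter S).
Proof. by case=> s e; rewrite /inv_letter /= negbK. Qed.

Lemma inv_word_cons x w : inv_word (x :: w) = inv_word w ++ [:: inv_letter x].
Proof. by rewrite /inv_word /= rev_cons cats1. Qed.

Lemma inv_word_cat u v : inv_word (u ++ v) = inv_word v ++ inv_word u.
Proof. by rewrite /inv_word map_cat rev_cat. Qed.

Lemma inv_wordK : involutive (@inv_word S).
Proof.
by elim=> [|x w IH] //; rewrite inv_word_cons inv_word_cat IH /inv_word /= inv_letterK.
Qed.

Lemma size_inv_word w : size (inv_word w) = size w.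
Proof. by rewrite /inv_word size_rev size_map. Qed.

Lemma inv_word_flatten (ws : seq (word S)) :
  inv_word (flatten ws) = flatten (rev (map (@inv_word S) ws)).
Proof. by elim: ws => [|w ws IH] //=; rewrite inv_word_cat IH rev_cons flatten_rcons. Qed.

Definition push_letter x (r : word S) : word S :=
  if r is y :: r' then (if y == inv_letter x then r' else x :: y :: r') else [:: x].

Lemma reduce_cons x w : reduce (x :: w) = push_letter x (reduce w).
Proof. by []. Qed.

Fixpoint reduced w : bool :=
  if w is x :: ((y :: _) as w') then (y != inv_letter x) && reduced w' else true.

Lemma reduced_behead x w : reduced (x :: w) -> reduced w.
Proof. by case: w => //= y w /andP[]. Qed.

Lemma push_letter_reduced x r : reduced r -> reduced (push_letter x r).
Proof.
case: r => [//|y r] /= Hr; case: ifP => [_|/negbT ne]; first exact: reduced_behead Hr.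
by rewrite /= ne Hr.
Qed.

Lemma reduce_reduced w : reduced (reduce w).
Proof. by elim: w => [//|x w IH]; rewrite reduce_cons push_letter_reduced. Qed.

Lemma reduced_reduce w : reduced w -> reduce w = w.
Proof.
elim: w => [//|x w IH] Hw; rewrite reduce_cons IH ?(reduced_behead Hw) //.
by case: w Hw {IH} => [//|y w] /= /andP[/negbTE->].
Qed.

Lemma reduce_idem w : reduce (reduce w) = reduce w.
Proof. exact/reduced_reduce/reduce_reduced. Qed.

Lemma push_letterK x r : reduced r -> push_letter x (push_letter (inv_letter x) r) = r.
Proof.
case: r => [|y r] Hr /=; first by rewrite eqxx.
case: eqP => [|_]; last by rewrite /= eqxx.
by rewrite inv_letterK => <-; case: r Hr => [//|z r] /= /andP[/negbTE->].
Qed.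

Lemma reduce_cat a b : reduce (a ++ b) = foldr push_letter (reduce b) a.
Proof. by elim: a => //= x a ->. Qed.

Lemma foldr_push_letter_reduce a r :
  reduced r -> foldr push_letter r a = foldr push_letter r (reduce a).
Proof.
have reduced_foldr t s : reduced t -> reduced (foldr push_letter t s).
  by move=> Ht; elim: s => //= x s IH; apply: push_letter_reduced.
move=> Hr; elim: a => [//|x a IH] /=; rewrite IH.
case: (reduce a) => [//|y s] /=.
by case: eqP => [->|_] //; rewrite push_letterK // reduced_foldr.
Qed.

Lemma reduce_catl a b : reduce (a ++ b) = reduce (reduce a ++ b).
Proof. by rewrite !reduce_cat -foldr_push_letter_reduce // reduce_reduced. Qed.

Lemma reduce_catr a b : reduce (a ++ b) = reduce (a ++ reduce b).
Proof. by rewrite !reduce_cat reduce_idem. Qed.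

Lemma reduce_cat_congr u u' v v' :
  reduce u = reduce u' -> reduce v = reduce v' -> reduce (u ++ v) = reduce (u' ++ v').
Proof. by move=> Hu Hv; rewrite reduce_catl Hu -reduce_catl reduce_catr Hv -reduce_catr. Qed.

Lemma reduce_cat_invK b c : reduce (b ++ inv_word b ++ c) = reduce c.
Proof.
elim: b c => [|x b IH] c //.
have -> : (x :: b) ++ inv_word (x :: b) ++ c = x :: b ++ inv_word b ++ inv_letter x :: c.
  by rewrite inv_word_cons -catA.
by rewrite reduce_cons IH reduce_cons push_letterK // reduce_reduced.
Qed.

Lemma reduce_cat_Kinv b c : reduce (inv_word b ++ b ++ c) = reduce c.
Proof. by rewrite -{2}(inv_wordK b) reduce_cat_invK. Qed.

Lemma reduce_cancel a b c : reduce (a ++ b ++ inv_word b ++ c) = reduce (a ++ c).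
Proof. by rewrite reduce_catr reduce_cat_invK -reduce_catr. Qed.

Lemma reduce_cancel_inv a b c : reduce (a ++ inv_word b ++ b ++ c) = reduce (a ++ c).
Proof. by rewrite reduce_catr reduce_cat_Kinv -reduce_catr. Qed.

Lemma reduce_inv_word_congr u u' :
  reduce u = reduce u' -> reduce (inv_word u) = reduce (inv_word u').
Proof.
move=> Hu; transitivity (reduce (inv_word u ++ u' ++ inv_word u' ++ [::])).
  by rewrite reduce_cancel cats0.
rewrite -(reduce_cat_congr (erefl (reduce (inv_word u))) (reduce_cat_congr Hu (erefl _))).
by rewrite reduce_cat_Kinv cats0.
Qed.

End FreeReduction.

(** * Area *)

Section Area.
Variables (S : finType) (R : seq (word S)).
Implicit Types (a s u v w z : word S) (fs : seq (word S * word S * bool)).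

Definition conj_relator (t : word S * word S * bool) : word S :=
  let: (u, r, e) := t in u ++ (if e then inv_word r else r) ++ inv_word u.

Lemma conj_prodE fs : conj_prod fs = flatten (map conj_relator fs).
Proof. by []. Qed.

Lemma conj_prod_cons t fs : conj_prod (t :: fs) = conj_relator t ++ conj_prod fs.
Proof. by []. Qed.

Lemma area_le_reduce w w' m : reduce w = reduce w' -> area_le R w m -> area_le R w' m.
Proof. by move=> e [fs [h1 h2 h3]]; exists fs; split; rewrite // /free_eq -e. Qed.

Lemma area_le_mono w m m' : m <= m' -> area_le R w m -> area_le R w m'.
Proof. by move=> le [fs [h1 h2 h3]]; exists fs; split => //; apply: leq_trans le. Qed.

Lemma area_le_cat u v m1 m2 :
  area_le R u m1 -> area_le R v m2 -> area_le R (u ++ v) (m1 + m2).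
Proof.
move=> [fs [h1 h2 h3]] [gs [g1 g2 g3]]; exists (fs ++ gs); split.
- by rewrite size_cat leq_add.
- by rewrite all_cat h2 g2.
- by rewrite /free_eq conj_prodE map_cat flatten_cat -!conj_prodE; apply: reduce_cat_congr.
Qed.

Lemma conj_prod_conj a fs :
  reduce (a ++ conj_prod fs ++ inv_word a) =
  reduce (conj_prod [seq (a ++ t.1.1, t.1.2, t.2) | t <- fs]).
Proof.
elim: fs => [|t fs IH]; first by rewrite /= -(cats0 (a ++ _)) -catA reduce_cat_invK.
transitivity (reduce ((a ++ conj_relator t ++ inv_word a) ++ a ++ conj_prod fs ++ inv_word a)).
  by rewrite conj_prod_cons -!catA [in RHS]catA reduce_cancel_inv -catA.
apply: reduce_cat_congr IH.
by case: t => [[v r] e]; rewrite /= inv_word_cat -!catA.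
Qed.

Lemma area_le_conj a u m : area_le R u m -> area_le R (a ++ u ++ inv_word a) m.
Proof.
move=> [fs [h1 h2 h3]]; exists [seq (a ++ t.1.1, t.1.2, t.2) | t <- fs]; split.
- by rewrite size_map.
- by rewrite all_map.
- by rewrite /free_eq -conj_prod_conj; do 2 apply: reduce_cat_congr => //.
Qed.

Lemma area_le_inv u m : area_le R u m -> area_le R (inv_word u) m.
Proof.
move=> [fs [h1 h2 h3]]; exists (rev [seq (t.1.1, t.1.2, ~~ t.2) | t <- fs]); split.
- by rewrite size_rev size_map.
- by rewrite all_rev all_map.
rewrite /free_eq (reduce_inv_word_congr h3) !conj_prodE inv_word_flatten -!map_rev -!map_comp.
congr (reduce (flatten _)); apply: eq_map => -[[v r] e] /=.
by rewrite !inv_word_cat inv_wordK -catA; case: e; rewrite //= inv_wordK.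
Qed.

Lemma in_ncl_inv u : in_ncl R u -> in_ncl R (inv_word u).
Proof. by case=> m /area_le_inv; exists m. Qed.

Lemma area_le_splice a u s z m1 m2 :
  area_le R (u ++ inv_word s) m1 -> area_le R (a ++ s ++ z) m2 ->
  area_le R (a ++ u ++ z) (m1 + m2).
Proof.
move=> H1 H2; apply: area_le_reduce (area_le_cat (area_le_conj a H1) H2).
have := reduce_cancel_inv (a ++ u ++ inv_word s) a (s ++ z); rewrite -!catA => ->.
by have := reduce_cancel_inv (a ++ u) s z; rewrite -!catA.
Qed.

Lemma in_ncl_splice a u s z :
  in_ncl R (u ++ inv_word s) -> in_ncl R (a ++ s ++ z) -> in_ncl R (a ++ u ++ z).
Proof. by move=> [m1 H1] [m2 H2]; exists (m1 + m2); apply: area_le_splice H1 H2. Qed.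

End Area.

(** * Chordal splits and the exponential isoperimetric bound *)

Definition splice (T : Type) (w : seq T) i j (s : seq T) := take i.-1 w ++ s ++ drop j w.

(* Either [s] is empty and [s_i ... s_j] is a proper subword, or [(i, j, s)] is a
   chord in the sense of [k_chordal]; in both cases the two pieces are shorter. *)
Definition short_split (T : Type) (w : seq T) i j (s : seq T) : bool :=
  [&& 1 <= i, i <= j, j <= size w &
   ((i != 1) || (j != size w)) && (size s == 0) ||
   [&& i < j, size s + i <= j & size s + j + 2 <= size w + i]].

Lemma map_splice (T U : Type) (f : T -> U) w i j s :
  map f (splice w i j s) = splice (map f w) i j (map f s).
Proof. by rewrite /splice !map_cat map_take map_drop. Qed.

Lemma short_split_map (T U : Type) (f : T -> U) w i j s :
  short_split (map f w) i j (map f s) = short_split w i j s.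
Proof. by rewrite /short_split !size_map. Qed.

Section ChordalSplit.
Variables (S : finType) (R : seq (word S)).
Implicit Types (s w : word S).

Definition chord_loop w i j s := subword w i j ++ inv_word s.

Lemma subword_split w i j : 1 <= i -> i <= j -> j <= size w ->
  w = take i.-1 w ++ subword w i j ++ drop j w.
Proof.
move=> h1 h2 h3; rewrite /subword.
have -> : drop j w = drop (j.+1 - i) (drop i.-1 w) by rewrite drop_drop; congr drop; lia.
by rewrite !cat_take_drop.
Qed.

Lemma size_subword w i j : 1 <= i -> i <= j -> j <= size w ->
  size (subword w i j) = j.+1 - i.
Proof. by move=> h1 h2 h3; rewrite /subword size_take_min size_drop; lia. Qed.

Lemma subword_full w : subword w 1 (size w) = w.
Proof. by rewrite /subword subn1 /= drop0 take_size. Qed.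

Lemma short_split_size w i j s : short_split w i j s ->
  size (chord_loop w i j s) < size w /\ size (splice w i j s) < size w.
Proof.
case/and4P=> h1 h2 h3 hs.
rewrite /chord_loop /splice !size_cat size_inv_word size_subword // size_take_min size_drop.
by case/orP: hs => [/andP[hp /eqP->]|/and3P[]]; lia.
Qed.

Lemma short_split_size_le w i j s : short_split w i j s -> size s <= size w.
Proof. by case/and4P=> h1 h2 h3; case/orP=> [/andP[_ /eqP->]|/and3P[]] //; lia. Qed.

Lemma short_split_sound w i j s : short_split w i j s ->
  in_ncl R (chord_loop w i j s) -> in_ncl R (splice w i j s) -> in_ncl R w.
Proof.
by case/and4P=> h1 h2 h3 _ Hl Hs; rewrite (subword_split h1 h2 h3); apply: in_ncl_splice Hl Hs.
Qed.

Lemma chordal_short_split k w : k_chordal R k -> in_ncl R w -> maxn k 3 <= size w ->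
  exists i j s, [/\ short_split w i j s, in_ncl R (chord_loop w i j s)
                  & in_ncl R (splice w i j s)].
Proof.
rewrite geq_max => Hk Hw /andP[Hkw H3w].
have splice_ncl i j s : 1 <= i -> i <= j -> j <= size w ->
    in_ncl R (chord_loop w i j s) -> in_ncl R (splice w i j s).
  move=> h1 h2 h3 /in_ncl_inv; rewrite inv_word_cat inv_wordK => Hl.
  by apply: in_ncl_splice Hl _; rewrite -subword_split.
case: (classic (simple_relation R w)) => [sw|nsw].
  have [i [j [s [[h1 h2 h3] [h4 h5 h6]]]]] := Hk w sw Hkw.
  exists i, j, s; split; last by apply: splice_ncl => //; apply: ltnW.
    by rewrite /short_split h1 (ltnW h2) h3 h2 h4 h5 orbT.
  exact: h6.
have [p [q [h1 h2 h3 Hpq Hproper]]] : exists p q, [/\ 1 <= p, p <= q, q <= size w,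
    in_ncl R (subword w p q) & ~ (p = 1 /\ q = size w)].
  apply: NNPP => Hno; apply: nsw; split=> // p q h1 h2 h3.
  split=> [Hpq|[-> ->]]; last by rewrite subword_full.
  by apply: NNPP => Hproper; apply: Hno; exists p, q.
have Hl : in_ncl R (chord_loop w p q [::]) by rewrite /chord_loop cats0.
exists p, q, [::]; split; last exact: splice_ncl.
  rewrite /short_split h1 h2 h3 /= andbT -negb_and.
  by apply/orP; left; apply/negP => /andP[/eqP ? /eqP ?]; apply: Hproper.
exact: Hl.
Qed.

Fixpoint words_upto n : seq (word S) :=
  if n is n'.+1 then
    [::] :: [seq x :: w | x <- (enum {: S * bool} : seq (letter S)), w <- words_upto n']
  else [:: [::]].

Lemma words_uptoP n w : size w <= n -> w \in words_upto n.
Proof.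
elim: n w => [|n IH] [|x w] //= Hw; rewrite in_cons; apply/orP; right.
by apply/allpairsP; exists (x, w); rewrite mem_enum IH.
Qed.

Lemma area_bounded_on (ws : seq (word S)) :
  exists C, forall w, w \in ws -> in_ncl R w -> area_le R w C.
Proof.
elim: ws => [|w0 ws [C IH]]; first by exists 0.
case: (classic (in_ncl R w0)) => [[m Hm]|Hw0].
  exists (maxn C m) => w; rewrite in_cons => /orP[/eqP->|Hw] Hn.
    exact: area_le_mono (leq_maxr _ _) Hm.
  exact: area_le_mono (leq_maxl _ _) (IH w Hw Hn).
by exists C => w; rewrite in_cons => /orP[/eqP->|Hw] Hn //; apply: IH.
Qed.

(* Each split at most doubles the area bound, and it shortens both pieces. *)
Lemma chordal_area_le_exp k : k_chordal R k -> exists C, forall n w,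
  in_ncl R w -> size w <= n -> area_le R w (C * 2 ^ n).
Proof.
move=> Hk; have [C0 HC0] := area_bounded_on (words_upto (maxn k 3)).
exists C0.+1.
have small n w : in_ncl R w -> size w < maxn k 3 -> area_le R w (C0.+1 * 2 ^ n).
  move=> Hw Hsmall; apply: area_le_mono (HC0 w (words_uptoP (ltnW Hsmall)) Hw).
  by rewrite (leq_trans (leqnSn C0)) // leq_pmulr ?expn_gt0.
elim=> [|n IH] w Hw Hn; case: (ltnP (size w) (maxn k 3)) => [/(small _ _ Hw)//|Hbig].
  by move: Hbig; rewrite geq_max; lia.
have [i [j [s [Hsplit Hl Hs]]]] := chordal_short_split Hk Hw Hbig.
have [l1 l2] := short_split_size Hsplit.
case/and4P: Hsplit => h1 h2 h3 _; rewrite (subword_split h1 h2 h3).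
rewrite expnS mulnCA mul2n -addnn.
apply: area_le_splice; [apply: IH Hl _|apply: IH Hs _]; lia.
Qed.

Lemma chordal_isoperimetric k : k_chordal R k ->
  exists C, isoperimetric R (fun n => C * 2 ^ n).
Proof.
move=> /chordal_area_le_exp[C HC]; exists C; split=> // m n Hmn.
by rewrite leq_mul2l leq_pexp2l // orbT.
Qed.

End ChordalSplit.

(** * Primitive recursive expressions *)

(* Expressions are evaluated in an environment [env : seq nat]: [PRec n g h] iterates
   [h] [n] times from [g], [h] seeing [k :: acc :: env]; [PComp f a b c] evaluates [f]
   in the environment [[:: a; b; c]]. *)
Inductive prexpr : Type :=
| PVar of nat
| PZero
| PSucc of prexpr
| PRec of prexpr & prexpr & prexpr
| PComp of prexpr & prexpr & prexpr & prexpr.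

Fixpoint peval (e : prexpr) (env : seq nat) : nat :=
  match e with
  | PVar i => nth 0 env i
  | PZero => 0
  | PSucc e => (peval e env).+1
  | PRec n g h => iteri (peval n env) (fun k acc => peval h [:: k, acc & env]) (peval g env)
  | PComp f a b c => peval f [:: peval a env; peval b env; peval c env]
  end.

Fixpoint compile (arity : nat) (e : prexpr) : code :=
  match e with
  | PVar i => if i < arity then cProj i else cZero
  | PZero => cZero
  | PSucc e => cComp cSucc [:: compile arity e]
  | PRec n g h => cComp (cPrimRec (compile arity g) (compile arity.+2 h))
                        (compile arity n :: map cProj (iota 0 arity))
  | PComp f a b c => cComp (compile 3 f) [:: compile arity a; compile arity b; compile arity c]
  end.

Lemma evals_proj env i m : i + m = size env ->
  evals (map cProj (iota i m)) env (drop i env).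
Proof.
elim: m i => [|m IH] i Hm /=; first by rewrite drop_oversize; [apply: evsNil | lia].
rewrite (drop_nth 0); last by lia.
by apply: evsCons; [apply: evProj; lia | apply: IH; lia].
Qed.

Lemma compile_correct e env : eval (compile (size env) e) env (peval e env).
Proof.
elim: e env => [i||e IH|n IHn g IHg h IHh|f IHf a IHa b IHb c IHc] env /=.
- case: ltnP => H; first exact: evProj.
  by rewrite nth_default //; apply: evZero.
- exact: evZero.
- exact: evComp (evsCons (IH env) (evsNil _)) (evSucc _ _).
- apply: (evComp (ys := peval n env :: env)).
    by apply: evsCons => //; have := @evals_proj env 0 (size env) erefl; rewrite drop0.
  elim: (peval n env) => [|k IHk]; first exact: evRec0.
  exact: evRecS IHk (IHh [:: k, _ & env]).
- apply: (evComp (ys := [:: peval a env; peval b env; peval c env])).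
    by do 3 apply: evsCons => //; apply: evsNil.
  exact: (IHf [:: _; _; _]).
Qed.

Lemma recursive_fun_peval e f : (forall n, peval e [:: n] = f n) -> recursive_fun f.
Proof. by move=> Ef; exists (compile 1 e) => n; rewrite -Ef; apply: (compile_correct e [:: n]). Qed.

Lemma word_problem_solvable_peval (S : finType) (R : seq (word S)) e :
  (forall w : word S, peval e [:: enc_word w] < 2) ->
  (forall w : word S, peval e [:: enc_word w] = 1 <-> in_ncl R w) -> word_problem_solvable R.
Proof.
move=> Hbool Hdec; exists (compile 1 e) => w; have Hc := compile_correct e [:: enc_word w].
split=> [/Hdec E | Hw]; first by rewrite -[X in eval _ _ X]E.
suff E : peval e [:: enc_word w] = 0 by rewrite -[X in eval _ _ X]E.
by case: (peval e _) (Hbool w) (Hdec w) => [|[|]] // _ [/(_ erefl)].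
Qed.

Fixpoint shift (c d : nat) (e : prexpr) : prexpr :=
  match e with
  | PVar i => if i < c then PVar i else PVar (i + d)
  | PZero => PZero
  | PSucc e => PSucc (shift c d e)
  | PRec n g h => PRec (shift c d n) (shift c d g) (shift c.+2 d h)
  | PComp f a b c' => PComp f (shift c d a) (shift c d b) (shift c d c')
  end.

Lemma peval_shift e c env ext : c <= size env ->
  peval (shift c (size ext) e) (take c env ++ ext ++ drop c env) = peval e env.
Proof.
elim: e c env => [i||e IH|n IHn g IHg h IHh|f IHf a IHa b IHb c' IHc] c env Hc /=.
- case: ltnP => Hi /=; first by rewrite nth_cat size_takel // Hi nth_take.
  rewrite nth_cat size_takel // ltnNge (leq_trans Hi (leq_addr _ _)) /=.
  rewrite nth_cat ltnNge; have -> : size ext <= i + size ext - c by lia.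
  by rewrite /= nth_drop; congr nth; lia.
- by [].
- by rewrite IH.
- rewrite IHn // IHg //; apply: eq_iteri => k acc.
  exact: (IHh c.+2 [:: k, acc & env]).
- by rewrite IHa // IHb // IHc.
Qed.

Lemma peval_shift0 e ext env : peval (shift 0 (size ext) e) (ext ++ env) = peval e env.
Proof. by have := peval_shift e ext (leq0n (size env)); rewrite take0 drop0. Qed.

Lemma peval_shift1 e ext x env :
  peval (shift 1 (size ext) e) (x :: ext ++ env) = peval e (x :: env).
Proof. by have := @peval_shift e 1 (x :: env) ext (ltn0Sn _); rewrite /= take0 drop0. Qed.

(* Each combinator is made [Opaque] once its evaluation lemma is proved: otherwise [simpl]
   unfolds it inside [peval] and later rewrites with that lemma no longer match. *)
Definition PCst n := iter n PSucc PZero.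
Lemma peval_PCst n env : peval (PCst n) env = n.
Proof. by elim: n => //= n ->. Qed.
Opaque PCst.

Definition PAdd a b := PRec a b (PSucc (PVar 1)).
Lemma peval_PAdd a b env : peval (PAdd a b) env = peval a env + peval b env.
Proof. by rewrite /PAdd /=; elim: (peval a env) => //= k ->. Qed.
Opaque PAdd.

Definition PPred a := PRec a PZero (PVar 0).
Lemma peval_PPred a env : peval (PPred a) env = (peval a env).-1.
Proof. by rewrite /PPred /=; case: (peval a env). Qed.
Opaque PPred.

Definition PSub a b := PRec b a (PPred (PVar 1)).
Lemma peval_PSub a b env : peval (PSub a b) env = peval a env - peval b env.
Proof.
rewrite /PSub /=; elim: (peval b env) => [|k IH] /=; first by rewrite subn0.
by rewrite peval_PPred /= IH subnS.
Qed.
Opaque PSub.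

Definition PMul a b := PRec a PZero (PAdd (PVar 1) (shift 0 2 b)).
Lemma peval_PMul a b env : peval (PMul a b) env = peval a env * peval b env.
Proof.
rewrite /PMul /=; elim: (peval a env) => [|k IH] //=.
by rewrite peval_PAdd (peval_shift0 _ [:: k; _]) /= IH mulSn addnC.
Qed.
Opaque PMul.

Definition PPow a b := PRec b (PCst 1) (PMul (PVar 1) (shift 0 2 a)).
Lemma peval_PPow a b env : peval (PPow a b) env = peval a env ^ peval b env.
Proof.
rewrite /PPow /=; elim: (peval b env) => [|k IH] /=; first by rewrite peval_PCst.
by rewrite peval_PMul (peval_shift0 _ [:: k; _]) /= IH expnS mulnC.
Qed.
Opaque PPow.

Definition PSum n f := PRec n PZero (PAdd (PVar 1) (shift 1 1 f)).
Lemma peval_PSum n f env :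
  peval (PSum n f) env = \sum_(0 <= i < peval n env) peval f (i :: env).
Proof.
rewrite /PSum /=; elim: (peval n env) => [|k IH] /=; first by rewrite big_geq.
by rewrite peval_PAdd (peval_shift1 _ [:: _]) /= IH big_nat_recr.
Qed.
Opaque PSum.

Definition PLet a b := PRec (PSucc PZero) a (shift 0 1 b).
Lemma peval_PLet a b env : peval (PLet a b) env = peval b (peval a env :: env).
Proof. by rewrite /PLet /= (peval_shift0 _ [:: 0]). Qed.
Opaque PLet.

Definition PNot a := PComp (PSub (PCst 1) (PVar 0)) a PZero PZero.
Lemma peval_PNot a env : peval (PNot a) env = (peval a env == 0).
Proof. by rewrite /PNot /= peval_PSub peval_PCst /=; case: (peval a env) => [|[]]. Qed.
Opaque PNot.

Definition PPos a := PNot (PNot a).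
Lemma peval_PPos a env : peval (PPos a) env = (0 < peval a env).
Proof. by rewrite /PPos !peval_PNot eqb0 lt0n. Qed.
Opaque PPos.

Definition PLe a b := PNot (PSub a b).
Lemma peval_PLe a b env : peval (PLe a b) env = (peval a env <= peval b env).
Proof. by rewrite /PLe peval_PNot peval_PSub subn_eq0. Qed.
Opaque PLe.

Definition PLt a b := PLe (PSucc a) b.
Lemma peval_PLt a b env : peval (PLt a b) env = (peval a env < peval b env).
Proof. by rewrite /PLt peval_PLe. Qed.
Opaque PLt.

Definition PAnd a b := PPos (PMul (PPos a) (PPos b)).
Lemma peval_PAnd a b env :
  peval (PAnd a b) env = (0 < peval a env) && (0 < peval b env).
Proof. by rewrite /PAnd peval_PPos peval_PMul !peval_PPos muln_gt0 !lt0b. Qed.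
Opaque PAnd.

Definition POr a b := PPos (PAdd a b).
Lemma peval_POr a b env :
  peval (POr a b) env = (0 < peval a env) || (0 < peval b env).
Proof. by rewrite /POr peval_PPos peval_PAdd addn_gt0. Qed.
Opaque POr.

Definition PEq a b := PAnd (PLe a b) (PLe b a).
Lemma peval_PEq a b env : peval (PEq a b) env = (peval a env == peval b env).
Proof. by rewrite /PEq peval_PAnd !peval_PLe !lt0b eqn_leq. Qed.
Opaque PEq.

Definition PIf c a b := PAdd (PMul (PPos c) a) (PMul (PNot c) b).
Lemma peval_PIf c a b env :
  peval (PIf c a b) env = if 0 < peval c env then peval a env else peval b env.
Proof.
rewrite /PIf peval_PAdd !peval_PMul peval_PPos peval_PNot.
by case: (peval c env) => [|k] /=; rewrite ?mul1n ?mul0n ?addn0.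
Qed.
Opaque PIf.

Lemma sum_gt0_has (N : nat) (F : nat -> nat) :
  (0 < \sum_(0 <= i < N) F i) = has (fun i => 0 < F i) (iota 0 N).
Proof.
rewrite /index_iota subn0; elim: (iota 0 N) => [|x s IH]; rewrite ?big_nil ?big_cons //=.
by rewrite addn_gt0 IH.
Qed.

Definition PEx n f := PPos (PSum n f).
Lemma peval_PEx n f env :
  peval (PEx n f) env = has (fun i => 0 < peval f (i :: env)) (iota 0 (peval n env)).
Proof. by rewrite /PEx peval_PPos peval_PSum sum_gt0_has. Qed.
Opaque PEx.

Definition PAll n f := PNot (PSum n (PNot f)).
Lemma peval_PAll n f env :
  peval (PAll n f) env = all (fun i => 0 < peval f (i :: env)) (iota 0 (peval n env)).
Proof.
rewrite /PAll peval_PNot peval_PSum -[_ == 0]negbK -lt0n sum_gt0_has -all_predC.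
by congr nat_of_bool; apply: eq_all => i /=; rewrite peval_PNot lt0b lt0n.
Qed.
Opaque PAll.

Lemma sum_nat_lt N a : \sum_(0 <= i < N) (i < a) = minn N a.
Proof.
elim: N => [|N IH]; first by rewrite big_geq // min0n.
by rewrite big_nat_recr //= IH; case: (ltnP N a) => H; lia.
Qed.

(* The quotient [a %/ d] counts the [i < a] with [(i + 1) * d <= a]. *)
Definition PDiv a d :=
  PComp (PSum (PVar 0) (PLe (PMul (PSucc (PVar 0)) (PVar 2)) (PVar 1))) a d PZero.
Lemma peval_PDiv a d env : 0 < peval d env ->
  peval (PDiv a d) env = peval a env %/ peval d env.
Proof.
move=> Hd; rewrite /PDiv /= peval_PSum /=.
under eq_bigr => i _ do rewrite peval_PLe peval_PMul /= -(leq_divRL _ _ Hd).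
by rewrite sum_nat_lt; apply/minn_idPr; apply: leq_div.
Qed.
Opaque PDiv.

Definition PMod a d := PComp (PSub (PVar 0) (PMul (PVar 1) (PDiv (PVar 0) (PVar 1)))) a d PZero.
Lemma peval_PMod a d env : 0 < peval d env ->
  peval (PMod a d) env = peval a env %% peval d env.
Proof.
move=> Hd; rewrite /PMod /= peval_PSub peval_PMul peval_PDiv //=.
by rewrite {1}(divn_eq (peval a env) (peval d env)); lia.
Qed.
Opaque PMod.

(** * Coding sequences of numbers *)

Fixpoint seq_code (l : seq nat) : nat :=
  if l is a :: l' then 2 ^ a * (seq_code l').*2.+1 else 0.

Lemma seq_code_eq0 l : (seq_code l == 0) = (l == [::]).
Proof. by case: l => //= a l; rewrite muln_eq0 expn_eq0. Qed.

Lemma size_le_seq_code l : size l <= seq_code l.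
Proof. by elim: l => //= a l IH; have := expn_gt0 2 a; rewrite -mul2n; nia. Qed.

Lemma dvdn_pow2_odd a b o : odd o -> (2 ^ b.+1 %| 2 ^ a * o) = (b < a).
Proof.
move=> Ho; case: (ltnP b a) => H; first by apply: dvdn_mulr; rewrite dvdn_Pexp2l.
apply/negP => Hd; have : 2 ^ a.+1 %| 2 ^ a * o.
  by apply: dvdn_trans Hd; rewrite dvdn_Pexp2l.
by rewrite expnS mulnC dvdn_pmul2l ?expn_gt0 // dvdn2 Ho.
Qed.

(* The head [a] of a code [x] is the number of [i < x] with [2 ^ (i + 1) %| x]. *)
Definition PHead x :=
  PComp (PSum (PVar 0) (PNot (PMod (PVar 1) (PPow (PCst 2) (PSucc (PVar 0)))))) x PZero PZero.
Lemma peval_PHead x env l : peval x env = seq_code l -> peval (PHead x) env = head 0 l.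
Proof.
move=> Hx; rewrite /PHead /= peval_PSum /= Hx.
case: l Hx => [|a l] Hx; first by rewrite big_geq.
under eq_bigr => i _ do
  rewrite peval_PNot peval_PMod peval_PPow peval_PCst ?expn_gt0 //= -/(dvdn _ _) dvdn_pow2_odd
          /= ?odd_double //.
rewrite sum_nat_lt; apply/minn_idPr.
rewrite (leq_trans (ltnW (ltn_expl a (ltnSn 1)))) // -{1}(muln1 (2 ^ a)).
by rewrite leq_mul2l ltn0Sn orbT.
Qed.
Opaque PHead.

Definition PBehead x :=
  PComp (PDiv (PPred (PDiv (PVar 0) (PPow (PCst 2) (PHead (PVar 0))))) (PCst 2)) x PZero PZero.
Lemma peval_PBehead x env l : peval x env = seq_code l ->
  peval (PBehead x) env = seq_code (behead l).
Proof.
move=> Hx; rewrite /PBehead /= peval_PDiv peval_PCst // peval_PPred peval_PDiv;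
  rewrite ?peval_PPow ?peval_PCst ?expn_gt0 //.
rewrite (@peval_PHead (PVar 0) _ l) /= Hx //.
by case: l {Hx} => [//|a l] /=; rewrite mulKn ?expn_gt0 //= -mul2n mulKn.
Qed.
Opaque PBehead.

Definition PDrop i x := PRec i x (PBehead (PVar 1)).
Lemma peval_PDrop i x env l : peval x env = seq_code l ->
  peval (PDrop i x) env = seq_code (drop (peval i env) l).
Proof.
move=> Hx; rewrite /PDrop /=; elim: (peval i env) => [|k IH]; first by rewrite drop0.
by rewrite iteriS (@peval_PBehead _ _ (drop k l)) //= -drop1 drop_drop.
Qed.
Opaque PDrop.

Definition PNth x i := PComp (PHead (PDrop (PVar 1) (PVar 0))) x i PZero.
Lemma peval_PNth x i env l : peval x env = seq_code l ->
  peval (PNth x i) env = nth 0 l (peval i env).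
Proof.
move=> Hx; rewrite /PNth /= (@peval_PHead _ _ (drop (peval i env) l)).
  by rewrite -nth0 nth_drop addn0.
by rewrite (@peval_PDrop _ _ _ l).
Qed.
Opaque PNth.

Definition PSize x := PComp (PSum (PVar 0) (PPos (PDrop (PVar 0) (PVar 1)))) x PZero PZero.
Lemma peval_PSize x env l : peval x env = seq_code l -> peval (PSize x) env = size l.
Proof.
move=> Hx; rewrite /PSize /= peval_PSum /= Hx.
under eq_bigr => i _ do
  rewrite peval_PPos (@peval_PDrop _ _ _ l) // lt0n seq_code_eq0 -size_eq0 size_drop
          subn_eq0 -ltnNge.
by rewrite sum_nat_lt; apply/minn_idPr; apply: size_le_seq_code.
Qed.
Opaque PSize.

Definition PCons a x := PMul (PPow (PCst 2) a) (PSucc (PMul (PCst 2) x)).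
Lemma peval_PCons a x env l : peval x env = seq_code l ->
  peval (PCons a x) env = seq_code (peval a env :: l).
Proof. by move=> Hx; rewrite /PCons peval_PMul peval_PPow /= peval_PMul !peval_PCst Hx mul2n. Qed.
Opaque PCons.

(* After [k] steps the accumulator codes the last [k] elements, hence the index [n - 1 - k]. *)
Definition PMkseq n g :=
  PRec n PZero (PLet (PSub (PPred (shift 0 2 n)) (PVar 0)) (PCons (shift 1 2 g) (PVar 2))).
Lemma peval_PMkseq n g env :
  peval (PMkseq n g) env = seq_code (mkseq (fun p => peval g (p :: env)) (peval n env)).
Proof.
rewrite /PMkseq /=; set N := peval n env; set l := mkseq _ N.
suff H m : m <= N -> iteri m (fun k acc => peval (PLet (PSub (PPred (shift 0 2 n)) (PVar 0))
     (PCons (shift 1 2 g) (PVar 2))) [:: k, acc & env]) 0 = seq_code (drop (N - m) l).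
  by rewrite H // subnn drop0.
elim: m => [|m IH] Hm; first by rewrite subn0 drop_oversize // size_mkseq.
have -> : drop (N - m.+1) l = nth 0 l (N - m.+1) :: drop (N - m) l.
  by rewrite (drop_nth 0) ?size_mkseq; [congr (_ :: drop _ _) | ]; lia.
rewrite iteriS peval_PLet (@peval_PCons _ _ _ (drop (N - m) l)); last exact: IH (ltnW Hm).
rewrite peval_PSub peval_PPred (peval_shift0 _ [:: _; _]) (peval_shift1 _ [:: _; _]) /=.
have E : (peval n env).-1 - m = N - m.+1 by rewrite /N; lia.
by rewrite E nth_mkseq //; lia.
Qed.
Opaque PMkseq.

Definition bitn T z := T %/ 2 ^ z %% 2.

Definition PBit t z := PMod (PDiv t (PPow (PCst 2) z)) (PCst 2).
Lemma peval_PBit t z env : peval (PBit t z) env = bitn (peval t env) (peval z env).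
Proof. by rewrite /PBit peval_PMod peval_PCst // peval_PDiv peval_PPow peval_PCst ?expn_gt0. Qed.
Opaque PBit.

Lemma seq_code_inj : injective seq_code.
Proof.
have decode l : peval (PHead (PVar 0)) [:: seq_code l] = head 0 l /\
                peval (PBehead (PVar 0)) [:: seq_code l] = seq_code (behead l).
  by split; [apply: peval_PHead | apply: peval_PBehead].
elim=> [|a l IH] [|b l'] E //; try by move/eqP: E; rewrite ?seq_code_eq0 // eq_sym seq_code_eq0.
have [Ha Hl] := decode (a :: l); have [Hb Hl'] := decode (b :: l').
by move: Ha Hl; rewrite E Hb Hl' /= => -> /esym/IH ->.
Qed.

Lemma seq_code_surj x : exists l, x = seq_code l.
Proof.
elim/ltn_ind: x => -[|x] IH; first by exists [::].
have Hx := odd_double_half x.+1.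
have Hhalf : (x.+1)./2 < x.+1 by rewrite -divn2 ltn_divLR //; lia.
have [l Hl] := IH _ Hhalf.
case Ho: (odd x.+1) Hx => Hx; first by exists (0 :: l); rewrite /= mul1n -Hl; lia.
case: l Hl => [|a l] Hl; first by move: Hx; rewrite Hl.
by exists (a.+1 :: l); rewrite -Hx Hl /= expnS -mul2n mulnA.
Qed.

Lemma seq_code_lt_pow l B : all (fun a => a < B) l -> seq_code l < 2 ^ (B * size l).
Proof.
elim: l => [|a l IH] /=; first by rewrite muln0.
case/andP=> Ha /IH Hl; rewrite [B * _]mulnS expnD.
apply: (@leq_trans (2 ^ a * (2 * 2 ^ (B * size l)))).
  by rewrite ltn_pmul2l ?expn_gt0 //; lia.
by rewrite mulnA -expnSr leq_mul2r leq_pexp2l ?orbT.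
Qed.

Lemma bitn_lt2 T z : bitn T z < 2.
Proof. by rewrite /bitn ltn_pmod. Qed.

Lemma bitn_eq1 T z : (bitn T z == 1) = (bitn T z != 0).
Proof. by case: (bitn T z) (bitn_lt2 T z) => [|[]]. Qed.

Lemma sum_bits_lt (b : nat -> bool) z : \sum_(0 <= y < z) b y * 2 ^ y < 2 ^ z.
Proof.
elim: z => [|z IH]; first by rewrite big_geq.
by rewrite big_nat_recr //= expnS; case: (b z); lia.
Qed.

Lemma bitn_sum (b : nat -> bool) M z : z < M ->
  bitn (\sum_(0 <= y < M) b y * 2 ^ y) z = b z.
Proof.
move=> Hz; rewrite /bitn (@big_cat_nat _ _ _ z.+1) //= big_nat_recr //=.
have [q ->] : exists q, \sum_(z.+1 <= y < M) b y * 2 ^ y = q * 2 ^ z.+1.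
  exists ((\sum_(z.+1 <= y < M) b y * 2 ^ y) %/ 2 ^ z.+1); apply/esym/eqP; rewrite -dvdn_eq.
  rewrite big_seq dvdn_sum // => y; rewrite mem_index_iota => /andP[Hy _].
  by rewrite dvdn_mull // dvdn_Pexp2l.
set low := \sum_(0 <= y < z) _.
have -> : low + b z * 2 ^ z + q * 2 ^ z.+1 = (q * 2 + b z) * 2 ^ z + low by rewrite expnS; lia.
rewrite divnMDl ?expn_gt0 // divn_small ?sum_bits_lt // addn0.
by rewrite modnMDl; case: (b z).
Qed.

Section WordCoding.
Variable S : finType.
Implicit Types (x : letter S) (w : word S).

Lemma enc_wordE w : enc_word w = seq_code (map (@enc_letter S) w).
Proof. by elim: w => //= x w ->. Qed.

Lemma enc_letter_lt x : enc_letter x < 2 * #|S|.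
Proof.
case: x => s b; rewrite /enc_letter /=.
have : 2 * (enum_rank s).+1 <= 2 * #|S| by rewrite leq_mul2l ltn_ord.
by case: b => /=; lia.
Qed.

Lemma enc_letter_inj : injective (@enc_letter S).
Proof.
move=> [s b] [s' b']; rewrite /enc_letter /= => E.
have Hb : b = b' by move: (congr1 odd E); rewrite !oddD !odd_double !oddb.
by subst b'; move/addIn/double_inj/ord_inj/enum_rank_inj: E => ->.
Qed.

Lemma enc_word_inj : injective (@enc_word S).
Proof.
move=> w w'; rewrite !enc_wordE => /seq_code_inj.
by move/(inj_map enc_letter_inj).
Qed.

Lemma enc_letter_surj a : a < 2 * #|S| -> exists x : letter S, enc_letter x = a.
Proof.
move=> Ha; have Hr : a./2 < #|S| by rewrite -divn2 ltn_divLR //; lia.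
exists (enum_val (Ordinal Hr), odd a).
by rewrite /enc_letter /= enum_valK /= addnC odd_double_half.
Qed.

Lemma all_enc_letter_lt w : all (fun a => a < 2 * #|S|) (map (@enc_letter S) w).
Proof. by rewrite all_map; apply/allP => x _; apply: enc_letter_lt. Qed.

Lemma enc_letter_codes (l : seq nat) : all (fun a => a < 2 * #|S|) l ->
  exists w : word S, l = map (@enc_letter S) w.
Proof.
elim: l => [|a l IH] /=; first by exists [::].
by case/andP=> /enc_letter_surj [x <-] /IH [w ->]; exists (x :: w).
Qed.

Lemma enc_word_lt_pow w : enc_word w < 2 ^ (2 * #|S| * size w).
Proof. by rewrite enc_wordE -(size_map (@enc_letter S)) seq_code_lt_pow // all_enc_letter_lt. Qed.

Lemma enc_word_lt_pow_le w n : size w <= n -> enc_word w < 2 ^ (2 * #|S| * n).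
Proof.
by move=> Hn; rewrite (leq_trans (enc_word_lt_pow w)) // leq_pexp2l // leq_mul2l Hn orbT.
Qed.

Definition inv_code (a : nat) := if odd a then a.-1 else a.+1.

Lemma enc_inv_letter x : enc_letter (inv_letter x) = inv_code (enc_letter x).
Proof.
by case: x => s [] /=; rewrite /enc_letter /inv_code /= oddD odd_double /= ?addn0 ?addn1.
Qed.

Lemma enc_inv_word w :
  map (@enc_letter S) (inv_word w) = rev (map inv_code (map (@enc_letter S) w)).
Proof.
by rewrite /inv_word map_rev -!map_comp; congr rev; apply: eq_map => x /=; apply: enc_inv_letter.
Qed.

End WordCoding.

Definition PInvCode a :=
  PComp (PIf (PMod (PVar 0) (PCst 2)) (PPred (PVar 0)) (PSucc (PVar 0))) a PZero PZero.
Lemma peval_PInvCode a env : peval (PInvCode a) env = inv_code (peval a env).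
Proof.
rewrite /PInvCode /= peval_PIf peval_PMod peval_PCst // modn2 peval_PPred /= /inv_code.
by case: odd.
Qed.
Opaque PInvCode.

Lemma mkseq_nth_eq (f : nat -> nat) (s : seq nat) :
  (forall p, p < size s -> f p = nth 0 s p) -> mkseq f (size s) = s.
Proof.
move=> Hf; apply: (@eq_from_nth _ 0); rewrite size_mkseq // => p Hp.
by rewrite nth_mkseq // Hf.
Qed.

Definition PMin a b := PSub a (PSub a b).
Lemma peval_PMin a b env : peval (PMin a b) env = minn (peval a env) (peval b env).
Proof. by rewrite /PMin !peval_PSub; lia. Qed.
Opaque PMin.

Definition PCat x y :=
  PMkseq (PAdd (PSize x) (PSize y))
    (PIf (PLt (PVar 0) (PSize (shift 0 1 x))) (PNth (shift 0 1 x) (PVar 0))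
         (PNth (shift 0 1 y) (PSub (PVar 0) (PSize (shift 0 1 x))))).
Lemma peval_PCat x y env l l' : peval x env = seq_code l -> peval y env = seq_code l' ->
  peval (PCat x y) env = seq_code (l ++ l').
Proof.
move=> Hx Hy; rewrite /PCat peval_PMkseq peval_PAdd (peval_PSize Hx) (peval_PSize Hy).
rewrite -size_cat mkseq_nth_eq // => p _.
have Hx' : peval (shift 0 1 x) (p :: env) = seq_code l by rewrite (peval_shift0 _ [:: p]).
have Hy' : peval (shift 0 1 y) (p :: env) = seq_code l' by rewrite (peval_shift0 _ [:: p]).
rewrite peval_PIf peval_PLt (peval_PSize Hx') lt0b /= nth_cat.
by case: ifP => _; rewrite (peval_PNth _ Hx', peval_PNth _ Hy') // peval_PSub (peval_PSize Hx').
Qed.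
Opaque PCat.

Definition PTake n x := PMkseq (PMin n (PSize x)) (PNth (shift 0 1 x) (PVar 0)).
Lemma peval_PTake n x env l : peval x env = seq_code l ->
  peval (PTake n x) env = seq_code (take (peval n env) l).
Proof.
move=> Hx; rewrite /PTake peval_PMkseq peval_PMin (peval_PSize Hx) -size_take_min.
rewrite mkseq_nth_eq // => p; rewrite size_take_min ltn_min => /andP[Hp _].
by rewrite (peval_PNth _ (l := l)) ?nth_take // (peval_shift0 _ [:: p]).
Qed.
Opaque PTake.

Definition PInvWord x :=
  PMkseq (PSize x) (PInvCode (PNth (shift 0 1 x) (PSub (PSize (shift 0 1 x)) (PSucc (PVar 0))))).
Lemma peval_PInvWord x env l : peval x env = seq_code l ->
  peval (PInvWord x) env = seq_code (rev (map inv_code l)).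
Proof.
move=> Hx; rewrite /PInvWord peval_PMkseq (peval_PSize Hx).
rewrite -(size_map inv_code) -size_rev mkseq_nth_eq // => p; rewrite size_rev size_map => Hp.
have Hx' : peval (shift 0 1 x) (p :: env) = seq_code l by rewrite (peval_shift0 _ [:: p]).
rewrite peval_PInvCode (peval_PNth _ Hx') peval_PSub (peval_PSize Hx') /=.
by rewrite nth_rev ?size_map // (nth_map 0) //; lia.
Qed.
Opaque PInvWord.

Definition PAllLt x b := PAll (PSize x) (PLt (PNth (shift 0 1 x) (PVar 0)) (shift 0 1 b)).
Lemma peval_PAllLt x b env l : peval x env = seq_code l ->
  peval (PAllLt x b) env = all (fun a => a < peval b env) l.
Proof.
move=> Hx; rewrite /PAllLt peval_PAll (peval_PSize Hx) -[in RHS](mkseq_nth 0 l) all_map.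
congr nat_of_bool; apply: eq_all => p /=.
by rewrite peval_PLt (peval_PNth _ (l := l)) !(peval_shift0 _ [:: p]) ?lt0b.
Qed.
Opaque PAllLt.

Definition PMem x (zs : seq nat) := foldr (fun z acc => POr (PEq x (PCst z)) acc) PZero zs.
Lemma peval_PMem x zs env : peval (PMem x zs) env = (peval x env \in zs).
Proof.
elim: zs => [//|z zs IH]; rewrite /PMem /= -/(PMem x zs).
by rewrite peval_POr peval_PEq peval_PCst IH !lt0b in_cons.
Qed.
Opaque PMem.

Definition PShortSplit n m i j :=
  PAnd (PLe (PCst 1) i) (PAnd (PLe i j) (PAnd (PLe j n)
    (POr (PAnd (PNot (PAnd (PEq i (PCst 1)) (PEq j n))) (PEq m PZero))
         (PAnd (PLt i j) (PAnd (PLe (PAdd m i) j) (PLe (PAdd (PAdd m j) (PCst 2)) (PAdd n i))))))).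
Lemma peval_PShortSplit (T : Type) (w s : seq T) n m i j env :
  peval n env = size w -> peval m env = size s ->
  peval (PShortSplit n m i j) env = short_split w (peval i env) (peval j env) s.
Proof.
move=> Hn Hm; rewrite /PShortSplit /short_split !(peval_PAnd, peval_POr, peval_PNot, peval_PEq,
  peval_PLe, peval_PLt, peval_PAdd, peval_PCst) Hn Hm /= !lt0b.
by rewrite -negb_and eqb0.
Qed.
Opaque PShortSplit.

Definition PSplice v i j s := PCat (PTake (PPred i) v) (PCat s (PDrop j v)).
Lemma peval_PSplice v i j s env l l' :
  peval v env = seq_code l -> peval s env = seq_code l' ->
  peval (PSplice v i j s) env = seq_code (splice l (peval i env) (peval j env) l').
Proof.
move=> Hv Hs; have Hrest := peval_PCat Hs (peval_PDrop j Hv).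
by rewrite /PSplice (peval_PCat (peval_PTake _ Hv) Hrest) peval_PPred.
Qed.
Opaque PSplice.

Definition PLoop v i j s := PCat (PTake (PSub (PSucc j) i) (PDrop (PPred i) v)) (PInvWord s).
Lemma peval_PLoop v i j s env l l' :
  peval v env = seq_code l -> peval s env = seq_code l' ->
  peval (PLoop v i j s) env =
  seq_code (subword l (peval i env) (peval j env) ++ rev (map inv_code l')).
Proof.
move=> Hv Hs; rewrite /PLoop (peval_PCat (peval_PTake _ (peval_PDrop _ Hv)) (peval_PInvWord Hs)).
by rewrite peval_PSub peval_PPred.
Qed.
Opaque PLoop.

(** * The decision procedure *)

(* Environment [[:: s, j, i, T, v & [:: M]]]: [v] codes the word to split, [s] the
   candidate replacement, [T] is the current table of trivial words. *)
Definition PStepBody L :=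
  PAnd (PAllLt (PVar 0) (PCst L))
  (PAnd (PShortSplit (PSize (PVar 4)) (PSize (PVar 0)) (PVar 2) (PVar 1))
  (PAnd (PBit (PVar 3) (PLoop (PVar 4) (PVar 2) (PVar 1) (PVar 0)))
        (PBit (PVar 3) (PSplice (PVar 4) (PVar 2) (PVar 1) (PVar 0))))).

Lemma peval_PStepBody L T l l' i j M :
  0 < peval (PStepBody L) [:: seq_code l', j, i, T, seq_code l & [:: M]] =
  [&& all (fun a => a < L) l', short_split l i j l',
      bitn T (seq_code (subword l i j ++ rev (map inv_code l'))) == 1
    & bitn T (seq_code (splice l i j l')) == 1].
Proof.
set env := [:: seq_code l', j, i, T, seq_code l & [:: M]].
have Hl : peval (PSize (PVar 4)) env = size l by apply: peval_PSize.
have Hl' : peval (PSize (PVar 0)) env = size l' by apply: peval_PSize.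
rewrite /PStepBody peval_PAnd (@peval_PAllLt (PVar 0) (PCst L) _ l') // peval_PCst.
rewrite peval_PAnd (peval_PShortSplit _ _ Hl Hl') peval_PAnd !peval_PBit.
rewrite (@peval_PLoop _ _ _ _ _ l l') // (@peval_PSplice _ _ _ _ _ l l') //=.
by rewrite !lt0b !lt0n -!bitn_eq1.
Qed.

Definition PStep L :=
  PEx (PSucc (PSize (PVar 1))) (PEx (PSucc (PSize (PVar 2))) (PEx (PVar 4) (PStepBody L))).

Lemma peval_PStep L T l M :
  peval (PStep L) [:: T; seq_code l; M] =
  has (fun i => has (fun j => has (fun y =>
         0 < peval (PStepBody L) [:: y, j, i, T, seq_code l & [:: M]])
       (iota 0 M)) (iota 0 (size l).+1)) (iota 0 (size l).+1).
Proof.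
rewrite /PStep peval_PEx [peval (PSucc _) _]/= (peval_PSize (l := l)) //.
congr nat_of_bool; apply: eq_has => i.
rewrite peval_PEx lt0b [peval (PSucc _) _]/= (peval_PSize (l := l)) //; apply: eq_has => j.
by rewrite peval_PEx lt0b.
Qed.

(* Environment [[:: y, t, T & [:: M]]]. *)
Definition PTableEntry L K zs :=
  PIf (PLt (PSize (PVar 0)) (PCst K)) (PMem (PVar 0) zs)
      (PComp (PStep L) (PVar 2) (PVar 0) (PVar 3)).

Definition PTable0 zs := PSum (PVar 0) (PMul (PMem (PVar 0) zs) (PPow (PCst 2) (PVar 0))).

Definition PTableStep L K zs :=
  PSum (PVar 2) (PMul (PPos (PTableEntry L K zs)) (PPow (PCst 2) (PVar 0))).

(* Codes of words of length at most [n] lie below [M = 2 ^ (L * n)]; after [n] steps the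
   table is correct for all of them. *)
Definition PDecide L K zs :=
  PLet (PSize (PVar 0)) (PLet (PPow (PCst 2) (PMul (PCst L) (PVar 0)))
    (PBit (PRec (PVar 1) (PTable0 zs) (PTableStep L K zs)) (PVar 2))).

Lemma peval_PTable0 zs M rest :
  peval (PTable0 zs) (M :: rest) = \sum_(0 <= y < M) (y \in zs) * 2 ^ y.
Proof.
rewrite /PTable0 peval_PSum; apply: eq_bigr => y _.
by rewrite peval_PMul peval_PMem peval_PPow peval_PCst.
Qed.

Lemma peval_PTableStep L K zs t T M rest :
  peval (PTableStep L K zs) [:: t, T, M & rest] =
  \sum_(0 <= y < M) (0 < peval (PTableEntry L K zs) [:: y, t, T, M & rest]) * 2 ^ y.
Proof.
rewrite /PTableStep peval_PSum; apply: eq_bigr => y _.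
by rewrite peval_PMul peval_PPos peval_PPow peval_PCst.
Qed.

Lemma peval_PTableEntry L K zs (S : finType) (v : word S) t T M rest :
  0 < peval (PTableEntry L K zs) [:: enc_word v, t, T, M & rest] =
  if size v < K then enc_word v \in zs else 0 < peval (PStep L) [:: T; enc_word v; M].
Proof.
rewrite /PTableEntry peval_PIf peval_PLt (peval_PSize (l := map (@enc_letter S) v)) ?enc_wordE //.
by rewrite size_map peval_PCst lt0b; case: ifP; rewrite ?peval_PMem ?lt0b.
Qed.

Lemma peval_PDecide L K zs (S : finType) (w : word S) (M := 2 ^ (L * size w)) :
  peval (PDecide L K zs) [:: enc_word w] =
  bitn (iteri (size w) (fun t T => peval (PTableStep L K zs) [:: t, T, M, size w & [:: enc_word w]])
         (peval (PTable0 zs) [:: M; size w; enc_word w]))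
       (enc_word w).
Proof.
rewrite /PDecide peval_PLet (peval_PSize (l := map (@enc_letter S) w)) ?enc_wordE //.
by rewrite peval_PLet peval_PPow peval_PMul !peval_PCst /= peval_PBit /= size_map.
Qed.

Lemma exists_filter (T : eqType) (s : seq T) (P : T -> Prop) :
  exists s' : seq T, forall x, x \in s' <-> x \in s /\ P x.
Proof.
elim: s => [|a s [s' IH]]; first by exists [::] => x; split=> // -[].
case: (classic (P a)) => Pa; [exists (a :: s') | exists s'] => x; rewrite !in_cons.
  split=> [/orP[/eqP-> | /IH[xs Px]] | [/orP[/eqP-> | xs] Px]]; rewrite ?eqxx //.
    by rewrite xs orbT.
  by apply/orP; right; apply/IH.
split=> [/IH[xs Px] | [/orP[/eqP Exa | xs] Px]]; first by rewrite xs orbT.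
  by rewrite Exa in Px.
exact/IH.
Qed.

Section Decider.
Variables (S : finType) (R : seq (word S)) (k : nat).
Hypothesis chordal : k_chordal R k.
Local Notation L := (2 * #|S|).
Local Notation K := (maxn k 3).

Lemma enc_chord_loop (v s : word S) i j :
  map (@enc_letter S) (chord_loop v i j s) =
  subword (map (@enc_letter S) v) i j ++ rev (map inv_code (map (@enc_letter S) s)).
Proof. by rewrite /chord_loop /subword map_cat map_take map_drop enc_inv_word. Qed.

Definition table_ok n T t := forall v : word S, size v <= n -> size v < K + t ->
  (bitn T (enc_word v) = 1 <-> in_ncl R v).

Lemma PStep_correct n T t v : table_ok n T t ->
  K <= size v -> size v <= n -> size v < K + t.+1 ->
  (0 < peval (PStep L) [:: T; enc_word v; 2 ^ (L * n)] <-> in_ncl R v).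
Proof.
move=> HT HK Hn Ht.
have shorter u : size u < size v -> bitn T (enc_word u) = 1 <-> in_ncl R u.
  by move=> Hu; apply: HT; lia.
rewrite enc_wordE peval_PStep lt0b size_map; split.
  case/hasP=> i _ /hasP[j _ /hasP[y _]]; have [l' ->] := seq_code_surj y.
  rewrite peval_PStepBody => /and4P[/enc_letter_codes[s ->] Hsplit /eqP Hl /eqP Hs].
  rewrite short_split_map in Hsplit; have [lt1 lt2] := short_split_size Hsplit.
  rewrite -enc_chord_loop -enc_wordE in Hl; rewrite -map_splice -enc_wordE in Hs.
  by apply: (short_split_sound Hsplit); [apply/(shorter _ lt1) | apply/(shorter _ lt2)].
move=> Hv; have [i [j [s [Hsplit Hl Hs]]]] := chordal_short_split chordal Hv HK.
have [lt1 lt2] := short_split_size Hsplit.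
have /and4P[h1 h2 h3 _] := Hsplit.
apply/hasP; exists i; first by rewrite mem_iota; lia.
apply/hasP; exists j; first by rewrite mem_iota; lia.
apply/hasP; exists (enc_word s).
  rewrite mem_iota /= (leq_trans (enc_word_lt_pow s)) // leq_pexp2l // leq_mul2l.
  by rewrite (leq_trans (short_split_size_le Hsplit)) ?orbT.
rewrite enc_wordE peval_PStepBody all_enc_letter_lt short_split_map Hsplit.
rewrite -enc_chord_loop -map_splice -!enc_wordE /=.
by apply/andP; split; apply/eqP; [apply/(shorter _ lt1) | apply/(shorter _ lt2)].
Qed.

Lemma short_trivial_codes : exists zs : seq nat,
  forall w : word S, size w < K -> (enc_word w \in zs <-> in_ncl R w).
Proof.
have [ws Hws] := exists_filter (words_upto S K) (in_ncl R).
exists (map (@enc_word S) ws) => w Hw; rewrite (mem_map (@enc_word_inj S)) Hws.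
by split=> [[] | Hn] //; split=> //; apply/words_uptoP/ltnW.
Qed.

Section Tables.
Variable zs : seq nat.
Hypothesis trivial_codes : forall w : word S, size w < K -> (enc_word w \in zs <-> in_ncl R w).

Lemma table_ok_PTable0 n rest : table_ok n (peval (PTable0 zs) (2 ^ (L * n) :: rest)) 0.
Proof.
move=> v Hn Hv; rewrite peval_PTable0 bitn_sum /=; last exact: enc_word_lt_pow_le.
have Hshort : size v < K by rewrite -(addn0 K).
split=> [/eqP | /(trivial_codes Hshort) ->] //.
by rewrite eqb1 => /(trivial_codes Hshort).
Qed.

Lemma table_ok_PTableStep n t T rest : table_ok n T t ->
  table_ok n (peval (PTableStep L K zs) [:: t, T, 2 ^ (L * n) & rest]) t.+1.
Proof.
move=> HT v Hn Hv; rewrite peval_PTableStep bitn_sum; last exact: enc_word_lt_pow_le.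
rewrite peval_PTableEntry; case: ltnP => HK.
  split=> [/eqP | /(trivial_codes HK) ->] //.
  by rewrite eqb1 => /(trivial_codes HK).
rewrite -(PStep_correct HT HK Hn Hv).
by split=> [/eqP | ->] //; rewrite eqb1.
Qed.

Lemma PDecide_correct w : peval (PDecide L K zs) [:: enc_word w] = 1 <-> in_ncl R w.
Proof.
rewrite peval_PDecide; set M := 2 ^ _.
suff table_iter t : table_ok (size w) (iteri t (fun t T =>
    peval (PTableStep L K zs) [:: t, T, M, size w & [:: enc_word w]])
    (peval (PTable0 zs) [:: M; size w; enc_word w])) t.
  by apply: table_iter => //; lia.
elim: t => [|t IH]; [exact: table_ok_PTable0 | exact: table_ok_PTableStep].
Qed.

End Tables.

Lemma chordal_word_problem_solvable : word_problem_solvable R.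
Proof.
have [zs trivial_codes] := short_trivial_codes.
apply: (@word_problem_solvable_peval _ _ (PDecide L K zs)) => [w|]; last exact: PDecide_correct.
by rewrite peval_PDecide bitn_lt2.
Qed.

End Decider.

Theorem theorem15 (S : finType) (R : seq (word S)) :
  (exists k : nat, k_chordal R k) ->
  (exists f : nat -> nat, isoperimetric R f /\ recursive_fun f) /\
  word_problem_solvable R.
Proof.
move=> [k chordal]; split; last exact: chordal_word_problem_solvable chordal.
have [C HC] := chordal_isoperimetric chordal.
exists (fun n => C * 2 ^ n); split=> //.
apply: (@recursive_fun_peval (PMul (PCst C) (PPow (PCst 2) (PVar 0)))) => n.
by rewrite peval_PMul peval_PPow !peval_PCst.
Qed.
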